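(* Fix integers $0\le k\le n$ and on $\mathbb{C}^n=\mathbb{R}^n_x\oplus\sqrt{-1}\mathbb{R}^n_y$ let $\rho_1=\sum_{i=1}^n x_i^2$, $\rho_2=\sum_{i=1}^k x_i^2+\sum_{i=k+1}^n y_i^2$, $|x|:=\sqrt{\rho_1}$, $|y|:=\sqrt{\rho_2}$, and $L_1=\{\rho_1=0\}$, $L_2=\{\rho_2=0\}$. For $r>0$ set $V_r=\{|x|<r\}\cup\{|y|<r\}$. Then for $r>0$ small enough there exist $0<D<1$ and a nonnegative function $\beta_r:\mathbb{C}^n\to\mathbb{R}$ whose restriction to $V_{Dr}$ is weakly plurisubharmonic and which satisfies \[\beta_r=|y|^2\ \text{on}\ \{|x|\ge r\}\cap V_{Dr},\qquad \beta_r=|x|^2\ \text{on}\ \{|y|\ge r\}\cap V_{Dr}.\] Furthermore, $\beta_r$ vanishes at least to first order on $L_1$ and on $L_2$, and the pseudometric $dd^c\beta_r(\cdot,\sqrt{-1}\cdot)$ is dominated above by the Euclidean metric $g$ everywhere and is equivalent to $g$ on $\{|y|>r\}\cap V_{Dr}$ and on $\{|x|>r\}\cap V_{Dr}$.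
   Context: Weak plurisubharmonicity of a function $f$ means that the Levi form $dd^cf(\cdot,\sqrt{-1}\cdot)$ is positive semidefinite; this symmetric form is called the pseudometric induced by $f$. Two (pseudo)metrics are equivalent if each is bounded by a positive constant multiple of the other. *)

From HB Require Import structures.
From mathcomp Require Import all_boot all_order all_algebra.
From mathcomp Require Import all_classical all_reals all_analysis.
Set Implicit Arguments. Unset Strict Implicit. Unset Printing Implicit Defensive.
Import Order.TTheory GRing.Theory Num.Theory.
Import numFieldNormedType.Exports.
Local Open Scope ring_scope.

(* C^n = R^n_x (+) sqrt(-1) R^n_y, a point z is the pair (x, y). *)
Definition Cn (R : realType) (n : nat) := ('rV[R]_n * 'rV[R]_n)%type.

Section Defs.
Variables (R : realType) (n : nat).

Definition xco (z : Cn R n) (i : 'I_n) : R := z.1 ord0 i.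
Definition yco (z : Cn R n) (i : 'I_n) : R := z.2 ord0 i.

(* complex structure: J (a + sqrt(-1) b) = -b + sqrt(-1) a *)
Definition Jc (v : Cn R n) : Cn R n := (- v.2, v.1).

Definition geucl (v : Cn R n) : R :=
  \sum_(i < n) (xco v i ^+ 2 + yco v i ^+ 2).

Definition rho1 (z : Cn R n) : R := \sum_(i < n) xco z i ^+ 2.
Definition rho2 (k : nat) (z : Cn R n) : R :=
  \sum_(i < n | (i < k)%N) xco z i ^+ 2 + \sum_(i < n | (k <= i)%N) yco z i ^+ 2.

Definition absx (z : Cn R n) : R := Num.sqrt (rho1 z).
Definition absy (k : nat) (z : Cn R n) : R := Num.sqrt (rho2 k z).

Definition Vset (k : nat) (r : R) : set (Cn R n) :=
  [set z | absx z < r] `|` [set z | absy k z < r].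

Definition C2 (f : Cn R n -> R) : Prop :=
  (forall z, differentiable f z) /\
  (forall v z, differentiable (fun a => 'D_v f a) z) /\
  (forall v w, continuous (fun a => 'D_w ('D_v f) a)).

(* Levi form dd^c f(v, sqrt(-1) v) at z, written via the real Hessian:
   D^2 f(v,v) + D^2 f(Jv,Jv) (convention dd^c = 2i dd-bar; other
   conventions differ by a positive constant factor). *)
Definition levi (f : Cn R n -> R) (z v : Cn R n) : R :=
  'D_v ('D_v f) z + 'D_(Jc v) ('D_(Jc v) f) z.

Definition weakly_psh_on (A : set (Cn R n)) (f : Cn R n -> R) : Prop :=
  forall z, A z -> forall v, 0 <= levi f z v.

End Defs.

From HB Require Import structures.
From mathcomp Require Import all_boot all_order all_algebra.
From mathcomp Require Import all_classical all_reals all_analysis.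
From mathcomp Require Import ring lra.
Import Order.TTheory GRing.Theory Num.Theory.
Import numFieldNormedType.Exports.
Local Open Scope classical_set_scope.
Local Open Scope ring_scope.

(* Let H be a C^2 cutoff with H(s) = s for s <= 1/4 and H(s) = 5/8 for
   s >= 1, and beta = (8 r^2 / 5) H(s) H(t) with s = rho1 / r^2 and
   t = rho2 / r^2.  On V_(r/16) one of s, t is below 1/256.  Where moreover
   |x| >= r we get H(s) = 5/8 and H(t) = t, so beta = rho2 = |y|^2 and its
   Levi form is 2 g; symmetrically where |y| >= r.  Where s < 1/256 we have
   H(s) = s, and the Levi form of H(s) H(t) only involves H(t), H'(t),
   H''(t) and the gradients of s and t.  The bounds |ds|^2 <= 4 s G,
   |dt|^2 <= 4 t G and Re <ds, dt> >= -(s + t) G with G = g(v, v) / r^2,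
   the last one a complex Cauchy-Schwarz inequality, reduce its positivity
   to a one-variable inequality for H. *)

Section Cutoff.
Context {R : realType}.

Definition has_derive2 (f f' f'' : R -> R) :=
  [/\ forall x : R, is_derive x (1 : R) f (f' x),
      forall x : R, is_derive x (1 : R) f' (f'' x)
    & continuous f''].

Definition pospart (x : R) : R := Num.max x 0.

Lemma pospart_id x : 0 <= x -> pospart x = x.
Proof. by move=> x0; rewrite /pospart max_l. Qed.

Lemma pospart_eq0 x : x <= 0 -> pospart x = 0.
Proof. by move=> x0; rewrite /pospart max_r. Qed.

Lemma pospart_continuous : continuous pospart.
Proof. by move=> x; apply: continuous_max; [exact: cvg_id|exact: cst_continuous]. Qed.

Lemma is_derive_pospartX0 k :
  is_derive (0 : R) (1 : R) (fun y => pospart y ^+ k.+2) 0.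
Proof.
have quotE : {near 0^', (fun h : R => pospart h ^+ k.+1) =1
    (fun h => h^-1 *: (pospart (h *: 1 + 0) ^+ k.+2 - pospart 0 ^+ k.+2))}.
  near=> h; have h0 : h != 0 by near: h; exact: nbhs_dnbhs_neq.
  rewrite addr0 [h *: 1]mulr1 (pospart_id _ (lexx 0)) expr0n subr0 [in RHS]exprS.
  rewrite /GRing.scale /=.
  have [hgt0|hle0] := ltP 0 h; first by rewrite pospart_id ?ltW // mulKf.
  by rewrite pospart_eq0 // expr0n mul0r mulr0.
have lim0 : (fun h : R => pospart h ^+ k.+1) @ 0^' --> pospart 0 ^+ k.+1.
  apply: cvg_within_filter.
  exact: continuous_comp (pospart_continuous 0) (@exprn_continuous R k.+1 _).
rewrite (pospart_id _ (lexx 0)) expr0n /= in lim0.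
set f := fun y : R => pospart y ^+ k.+2.
have cvgq : (fun h : R => h^-1 *: ((f \o shift 0) (h *: 1) - f 0)) @ 0^' --> (0 : R).
  exact: cvg_trans (near_eq_cvg quotE) lim0.
split; first by apply/cvg_ex; exists 0.
exact: cvg_lim.
Unshelve. all: by end_near.
Qed.

Lemma is_derive_pospartX k x :
  is_derive x (1 : R) (fun y => pospart y ^+ k.+2) (k.+2%:R * pospart x ^+ k.+1).
Proof.
have [xgt0|xlt0|<-] := ltgtP 0 x.
- have nearE : \near x, x ^+ k.+2 = pospart x ^+ k.+2.
    by near=> y; rewrite pospart_id // ltW //; near: y; exact: lt_nbhsr.
  apply: near_eq_is_derive nearE _.
  have := is_deriveX k.+2 (is_derive_id x (1 : R)).
  by rewrite exprfctE pospart_id ?ltW // [_ *: 1]mulr1.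
- have nearE : \near x, (0 : R) = pospart x ^+ k.+2.
    by near=> y; rewrite pospart_eq0 ?expr0n // ltW //; near: y; exact: lt_nbhsl.
  apply: near_eq_is_derive nearE _.
  by rewrite pospart_eq0 ?ltW // expr0n mulr0; exact: is_derive_cst.
- by rewrite (pospart_id _ (lexx 0)) expr0n mulr0; exact: is_derive_pospartX0.
Unshelve. all: by end_near.
Qed.

Lemma is_derive_pospartX_shift k a x :
  is_derive x (1 : R) (fun y => pospart (y - a) ^+ k.+2)
    (k.+2%:R * pospart (x - a) ^+ k.+1).
Proof.
rewrite -[X in is_derive _ _ _ X]mulr1.
exact: is_derive1_comp (is_derive_pospartX _ _) (is_derive_shift _ _ _).
Qed.

(* For s >= 1 the second difference of truncated cubes below equals
   27/32 (s - 5/8), so the cutoff is the constant 5/8 there. *)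
Definition cutoff (s : R) : R :=
  s - 32/27 * (pospart (s - 1/4) ^+ 3 - 2 * pospart (s - 5/8) ^+ 3
               + pospart (s - 1) ^+ 3).
Definition cutoff' (s : R) : R :=
  1 - 32/9 * (pospart (s - 1/4) ^+ 2 - 2 * pospart (s - 5/8) ^+ 2
              + pospart (s - 1) ^+ 2).
Definition cutoff'' (s : R) : R :=
  - (64/9) * (pospart (s - 1/4) - 2 * pospart (s - 5/8) + pospart (s - 1)).

Lemma has_derive2_cutoff : has_derive2 cutoff cutoff' cutoff''.
Proof.
pose P k a := fun y : R => pospart (y - a) ^+ k.+2.
have dP k a x := is_derive_pospartX_shift k a x.
split=> x.
- have -> : cutoff = id - (32/27 : R) *: (P 1 (1/4) - 2 *: P 1 (5/8) + P 1 1).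
    by apply/funext => y.
  by apply: is_derive_eq; rewrite /cutoff' /GRing.scale /=; field.
- have -> : cutoff' = cst 1 - (32/9 : R) *: (P 0 (1/4) - 2 *: P 0 (5/8) + P 0 1).
    by apply/funext => y.
  by apply: is_derive_eq; rewrite /cutoff'' /GRing.scale /=; field.
- have pc a : continuous (fun y : R => pospart (y - a)).
    move=> y; apply: (continuous_comp (f := fun y => y - a)) (pospart_continuous _).
    by apply: continuousB; [exact: cvg_id|exact: cst_continuous].
  have -> : cutoff'' = (fun y => (- (64/9) : R) *: pospart (y - 1/4))
      + (fun y => (128/9 : R) *: pospart (y - 5/8))
      + (fun y => (- (64/9) : R) *: pospart (y - 1)).
    by apply/funext => y; rewrite /cutoff'' !fctE /GRing.scale /=; field.
  by apply: continuousD; [apply: continuousD|];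
    apply: continuousZ; (exact: cst_continuous || exact: pc).
Qed.

End Cutoff.

Section CutoffValues.
Context {R : realType}.
Implicit Types s t : R.

Lemma cutoff_small {s} : s <= 1/4 ->
  [/\ cutoff s = s, cutoff' s = 1 & cutoff'' s = 0].
Proof.
by move=> s_le; rewrite /cutoff /cutoff' /cutoff'' !pospart_eq0; try lra; split; ring.
Qed.

Lemma cutoff_rising {s} : 1/4 <= s <= 5/8 ->
  [/\ cutoff s = s - 32/27 * (s - 1/4) ^+ 3,
      cutoff' s = 1 - 32/9 * (s - 1/4) ^+ 2
    & cutoff'' s = - (64/9) * (s - 1/4)].
Proof.
move=> /andP[s_ge s_le].
rewrite /cutoff /cutoff' /cutoff'' (pospart_id (s - 1/4)) ?(pospart_eq0 (s - 5/8))
  ?(pospart_eq0 (s - 1)); try lra.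
by split; ring.
Qed.

Lemma cutoff_flattening {s} : 5/8 <= s <= 1 ->
  [/\ cutoff s = 5/8 - 32/27 * (1 - s) ^+ 3,
      cutoff' s = 32/9 * (1 - s) ^+ 2
    & cutoff'' s = - (64/9) * (1 - s)].
Proof.
move=> /andP[s_ge s_le].
rewrite /cutoff /cutoff' /cutoff'' (pospart_id (s - 1/4)) ?(pospart_id (s - 5/8))
  ?(pospart_eq0 (s - 1)); try lra.
by split; field.
Qed.

Lemma cutoff_large {s} : 1 <= s ->
  [/\ cutoff s = 5/8, cutoff' s = 0 & cutoff'' s = 0].
Proof.
move=> s_ge; rewrite /cutoff /cutoff' /cutoff'' !pospart_id; try lra.
by split; field.
Qed.

Lemma cutoff_bounds {s} : 0 <= s ->
  [/\ 0 <= cutoff s <= 5/8, 0 <= cutoff' s <= 1, cutoff'' s <= 0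
    & cutoff' s * s <= 1].
Proof.
move=> s_ge0.
have [s_le|s_gt] := leP s (1/4).
  by have [-> -> ->] := cutoff_small s_le; split; lra.
have [s_le'|s_gt'] := leP s (5/8).
  have /cutoff_rising[-> -> ->] : 1/4 <= s <= 5/8 by apply/andP; split; lra.
  set d := s - 1/4; have d_ge0 : 0 <= d by rewrite /d; lra.
  have d_le : d <= 3/8 by rewrite /d; lra.
  have d2_le : d ^+ 2 <= 9/64 by rewrite expr2; nra.
  split; rewrite ?expr2 ?exprS ?expr2 in d2_le *; try (apply/andP; split); nra.
have [s_le''|s_gt''] := leP s 1.
  have /cutoff_flattening[-> -> ->] : 5/8 <= s <= 1 by apply/andP; split; lra.
  set e := 1 - s; have e_ge0 : 0 <= e by rewrite /e; lra.
  have e_le : e <= 3/8 by rewrite /e; lra.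
  have e2_le : e ^+ 2 <= 9/64 by rewrite expr2; nra.
  split; rewrite ?expr2 ?exprS ?expr2 in e2_le *; try (apply/andP; split); nra.
by have [-> -> ->] := cutoff_large (ltW s_gt''); split; lra.
Qed.

Lemma cutoff_key {t} : 1/4 <= t ->
  0 <= 2 * cutoff t - t * cutoff' t - (14 * cutoff' t - 4 * t * cutoff'' t) / 256.
Proof.
move=> t_ge.
have [t_le|t_gt] := leP t (5/8).
  have /cutoff_rising[-> -> ->] : 1/4 <= t <= 5/8 by apply/andP; split; lra.
  set d := t - 1/4; have -> : t = d + 1/4 by rewrite /d; ring.
  have d_ge0 : 0 <= d by rewrite /d; lra.
  have d_le : d <= 3/8 by rewrite /d; lra.
  rewrite !exprS expr0 !mulr1; nra.
have [t_le'|t_gt'] := leP t 1.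
  have /cutoff_flattening[-> -> ->] : 5/8 <= t <= 1 by apply/andP; split; lra.
  set e := 1 - t; have -> : t = 1 - e by rewrite /e; ring.
  have e_ge0 : 0 <= e by rewrite /e; lra.
  have e_le : e <= 3/8 by rewrite /e; lra.
  rewrite !exprS expr0 !mulr1; nra.
by have [-> -> ->] := cutoff_large (ltW t_gt'); lra.
Qed.

End CutoffValues.

Section LeviCutoffProduct.
Context {R : realType}.
Implicit Types s t G qa qb qab : R.

(* The Levi form of z |-> cutoff (s z) * cutoff (t z) when s and t both have
   Levi form 2 G and qa = |ds|^2, qb = |dt|^2, qab = Re <ds, dt>. *)
Definition levi_cutoff2 s t G qa qb qab : R :=
  cutoff t * (cutoff' s * (2 * G) + cutoff'' s * qa)
  + cutoff s * (cutoff' t * (2 * G) + cutoff'' t * qb)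
  + 2 * (cutoff' s * cutoff' t) * qab.

Lemma levi_cutoff2C s t G qa qb qab :
  levi_cutoff2 s t G qa qb qab = levi_cutoff2 t s G qb qa qab.
Proof. by rewrite /levi_cutoff2; ring. Qed.

Lemma levi_cutoff2_small_large s t G qa qb qab : s <= 1/4 -> 1 <= t ->
  levi_cutoff2 s t G qa qb qab = 5/4 * G.
Proof.
move=> s_le t_ge; rewrite /levi_cutoff2.
by have [-> -> ->] := cutoff_small s_le; have [-> -> ->] := cutoff_large t_ge; field.
Qed.

Lemma levi_cutoff2_ge0_left {s t G p1 p2 q1 q2} :
  0 <= s -> s < 1/256 -> 0 <= t -> 0 <= G ->
  p1 ^+ 2 + p2 ^+ 2 <= 4 * s * G -> q1 ^+ 2 + q2 ^+ 2 <= 4 * t * G ->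
  - ((s + t) * G) <= p1 * q1 + p2 * q2 ->
  0 <= levi_cutoff2 s t G (p1 ^+ 2 + p2 ^+ 2) (q1 ^+ 2 + q2 ^+ 2) (p1 * q1 + p2 * q2).
Proof.
move=> s_ge0 s_lt t_ge0 G_ge0 qa_le qb_le qab_ge.
set qa := p1 ^+ 2 + p2 ^+ 2 in qa_le *; set qb := q1 ^+ 2 + q2 ^+ 2 in qb_le *.
set qab := p1 * q1 + p2 * q2 in qab_ge *.
have qb_ge0 : 0 <= qb by rewrite /qb; apply: addr_ge0; apply: sqr_ge0.
have qab_ge' : - (4 * qa + qb / 4) <= 2 * qab.
  rewrite -subr_ge0.
  have -> : 2 * qab - - (4 * qa + qb / 4)
            = (2 * p1 + q1 / 2) ^+ 2 + (2 * p2 + q2 / 2) ^+ 2.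
    by rewrite /qa /qb /qab; field.
  by apply: addr_ge0; apply: sqr_ge0.
have s_le : s <= 1/4 by lra.
rewrite /levi_cutoff2; have [-> -> ->] := cutoff_small s_le.
have [t_le|t_gt] := leP t (1/4); first by have [-> -> ->] := cutoff_small t_le; lra.
have [_ /andP[d_ge0 d_le1] dd_le0 _] := cutoff_bounds t_ge0.
(* Once cutoff s = s, the bounds on qa, qb and qab leave G times the
   bracket of [cutoff_key]. *)
have key := cutoff_key (ltW t_gt).
have e1 : - (cutoff' t * (16 * s * G + t * G)) <= cutoff' t * (2 * qab).
  by rewrite -mulrN; apply: ler_wpM2l => //; lra.
have e2 : s * (cutoff'' t * (4 * t * G)) <= s * (cutoff'' t * qb).
  have : 0 <= s * (- cutoff'' t * (4 * t * G - qb)).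
    by apply: mulr_ge0 => //; apply: mulr_ge0; lra.
  lra.
have e3 : 0 <= G * (2 * cutoff t - t * cutoff' t
                    - (14 * cutoff' t - 4 * t * cutoff'' t) / 256).
  exact: mulr_ge0.
have e4 : s * G * (14 * cutoff' t - 4 * t * cutoff'' t)
          <= G * (14 * cutoff' t - 4 * t * cutoff'' t) / 256.
  have f0 : 0 <= 14 * cutoff' t - 4 * t * cutoff'' t.
    by have := mulr_ge0 t_ge0 (_ : 0 <= - cutoff'' t); lra.
  by have := mulr_ge0 (mulr_ge0 G_ge0 f0) (_ : 0 <= 1/256 - s); lra.
nra.
Qed.

Lemma levi_cutoff2_ge0 {s t G p1 p2 q1 q2} :
  0 <= s -> 0 <= t -> 0 <= G -> s < 1/256 \/ t < 1/256 ->
  p1 ^+ 2 + p2 ^+ 2 <= 4 * s * G -> q1 ^+ 2 + q2 ^+ 2 <= 4 * t * G ->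
  - ((s + t) * G) <= p1 * q1 + p2 * q2 ->
  0 <= levi_cutoff2 s t G (p1 ^+ 2 + p2 ^+ 2) (q1 ^+ 2 + q2 ^+ 2) (p1 * q1 + p2 * q2).
Proof.
move=> s_ge0 t_ge0 G_ge0 [s_lt|t_lt] qa_le qb_le qab_ge.
  exact: levi_cutoff2_ge0_left.
rewrite levi_cutoff2C (mulrC p1) (mulrC p2).
by apply: levi_cutoff2_ge0_left; rewrite // addrC (mulrC q1) (mulrC q2).
Qed.

Lemma levi_cutoff2_le {s t G p1 p2 q1 q2} : 0 <= s -> 0 <= t -> 0 <= G ->
  p1 ^+ 2 + p2 ^+ 2 <= 4 * s * G -> q1 ^+ 2 + q2 ^+ 2 <= 4 * t * G ->
  levi_cutoff2 s t G (p1 ^+ 2 + p2 ^+ 2) (q1 ^+ 2 + q2 ^+ 2) (p1 * q1 + p2 * q2)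
  <= 21/2 * G.
Proof.
move=> s_ge0 t_ge0 G_ge0 qa_le qb_le.
set qa := p1 ^+ 2 + p2 ^+ 2 in qa_le *; set qb := q1 ^+ 2 + q2 ^+ 2 in qb_le *.
set qab := p1 * q1 + p2 * q2.
have qa_ge0 : 0 <= qa by rewrite /qa; apply: addr_ge0; apply: sqr_ge0.
have qb_ge0 : 0 <= qb by rewrite /qb; apply: addr_ge0; apply: sqr_ge0.
have qab_le : 2 * qab <= qa + qb.
  rewrite -subr_ge0.
  have -> : qa + qb - 2 * qab = (p1 - q1) ^+ 2 + (p2 - q2) ^+ 2.
    by rewrite /qa /qb /qab; ring.
  by apply: addr_ge0; apply: sqr_ge0.
have [/andP[hs0 hs1] /andP[ds0 ds1] dds ds] := cutoff_bounds s_ge0.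
have [/andP[ht0 ht1] /andP[dt0 dt1] ddt dt] := cutoff_bounds t_ge0.
rewrite /levi_cutoff2.
have a1 : cutoff t * (cutoff' s * (2 * G) + cutoff'' s * qa) <= 5/4 * G.
  have : cutoff'' s * qa <= 0 by apply: mulr_le0_ge0.
  have : cutoff' s * (2 * G) <= 2 * G by rewrite ler_piMl //; lra.
  nra.
have a2 : cutoff s * (cutoff' t * (2 * G) + cutoff'' t * qb) <= 5/4 * G.
  have : cutoff'' t * qb <= 0 by apply: mulr_le0_ge0.
  have : cutoff' t * (2 * G) <= 2 * G by rewrite ler_piMl //; lra.
  nra.
have a3 : 2 * (cutoff' s * cutoff' t) * qab <= 8 * G.
  have dd0 : 0 <= cutoff' s * cutoff' t by apply: mulr_ge0.
  have : cutoff' s * cutoff' t * (2 * qab)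
         <= cutoff' s * cutoff' t * (4 * (s + t) * G).
    by apply: ler_wpM2l => //; lra.
  have c1 : cutoff' t * (cutoff' s * s) <= 1 by nra.
  have c2 : cutoff' s * (cutoff' t * t) <= 1 by nra.
  nra.
lra.
Qed.

End LeviCutoffProduct.

Section CauchySchwarz.
Context {R : realDomainType} {I : finType} (P : pred I).

Lemma double_sum_ge0 (t : I -> I -> R) : (forall i j, 0 <= t i j + t j i) ->
  0 <= \sum_(i | P i) \sum_(j | P j) t i j.
Proof.
move=> t_sym_ge0.
have : 0 <= \sum_(i | P i) \sum_(j | P j) (t i j + t j i).
  by apply: sumr_ge0 => i _; apply: sumr_ge0.
rewrite (eq_bigr (fun i => \sum_(j | P j) t i j + \sum_(j | P j) t j i));
  last by move=> i _; rewrite big_split.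
by rewrite big_split /= [X in _ + X]exchange_big /= -mulr2n pmulrn_lge0.
Qed.

(* |sum z_i w_i|^2 <= sum |z_i|^2 * sum |w_i|^2 for z = x + iy, w = a + ib *)
Lemma cauchy_schwarz_complex (x y a b : I -> R) :
  (\sum_(i | P i) (x i * a i - y i * b i)) ^+ 2
  + (\sum_(i | P i) (x i * b i + y i * a i)) ^+ 2
  <= (\sum_(i | P i) (x i ^+ 2 + y i ^+ 2)) * (\sum_(i | P i) (a i ^+ 2 + b i ^+ 2)).
Proof.
rewrite -subr_ge0.
set t := fun i j => (x i ^+ 2 + y i ^+ 2) * (a j ^+ 2 + b j ^+ 2)
  - ((x i * a i - y i * b i) * (x j * a j - y j * b j)
     + (x i * b i + y i * a i) * (x j * b j + y j * a j)).
have -> : (\sum_(i | P i) (x i ^+ 2 + y i ^+ 2)) * (\sum_(i | P i) (a i ^+ 2 + b i ^+ 2))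
    - ((\sum_(i | P i) (x i * a i - y i * b i)) ^+ 2
       + (\sum_(i | P i) (x i * b i + y i * a i)) ^+ 2)
    = \sum_(i | P i) \sum_(j | P j) t i j.
  rewrite !expr2 !big_distrlr /= -big_split /= -sumrB; apply: eq_bigr => i _.
  by rewrite -big_split -sumrB; apply: eq_bigr => j _.
apply: double_sum_ge0 => i j.
(* Lagrange's identity: the summand is |z_i w_j - z_j w_i|^2. *)
have -> : t i j + t j i = (x i * a j + y i * b j - (x j * a i + y j * b i)) ^+ 2
    + (y i * a j - x i * b j - (y j * a i - x j * b i)) ^+ 2 by rewrite /t; ring.
by apply: addr_ge0; apply: sqr_ge0.
Qed.

Lemma cauchy_schwarz_pair (x a b : I -> R) :
  (\sum_(i | P i) x i * a i) ^+ 2 + (\sum_(i | P i) x i * b i) ^+ 2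
  <= (\sum_(i | P i) x i ^+ 2) * (\sum_(i | P i) (a i ^+ 2 + b i ^+ 2)).
Proof.
have := cauchy_schwarz_complex x (fun=> 0) a b.
under eq_bigr do rewrite mul0r subr0.
under [X in _ + X ^+ 2 <= _]eq_bigr do rewrite mul0r addr0.
by under [X in _ <= X * _]eq_bigr do rewrite expr0n addr0.
Qed.

End CauchySchwarz.

Section SecondDifferential.
Context {R : realType} {V : normedModType R}.

Let continuousD_fun (f g : V -> R) x :
  {for x, continuous f} -> {for x, continuous g} ->
  {for x, continuous (fun z => f z + g z)}.
Proof. exact: continuousD. Qed.

Let continuousM_fun (f g : V -> R) x :
  {for x, continuous f} -> {for x, continuous g} ->
  {for x, continuous (fun z => f z * g z)}.
Proof. exact: continuousM. Qed.

Definition has_diff (f : V -> R) (df : V -> V -> R) :=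
  forall z, differentiable f z /\ forall v, 'D_v f z = df z v.

Definition has_diff2 (f : V -> R) (df : V -> V -> R) (d2f : V -> V -> V -> R) :=
  [/\ has_diff f df, forall v, has_diff (fun z => df z v) (fun z w => d2f z v w)
    & forall v w, continuous (fun z => d2f z v w)].

Lemma has_diff_continuous {f df} : has_diff f df -> continuous f.
Proof. by move=> fdf z; apply: differentiable_continuous; case: (fdf z). Qed.

Lemma has_diff_cst (c : R) : has_diff (fun _ => c) (fun _ _ => 0).
Proof.
by move=> z; split=> [|v]; [exact: differentiable_cst|rewrite derive_cst].
Qed.

Lemma has_diffD {f g df dg} : has_diff f df -> has_diff g dg ->
  has_diff (fun z => f z + g z) (fun z v => df z v + dg z v).
Proof.
move=> fdf gdg z; have [fz dfz] := fdf z; have [gz dgz] := gdg z.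
split=> [|v]; first exact: differentiableD.
by rewrite deriveD ?dfz ?dgz //; exact: diff_derivable.
Qed.

Lemma has_diffM {f g df dg} : has_diff f df -> has_diff g dg ->
  has_diff (fun z => f z * g z) (fun z v => f z * dg z v + g z * df z v).
Proof.
move=> fdf gdg z; have [fz dfz] := fdf z; have [gz dgz] := gdg z.
split=> [|v]; first exact: differentiableM.
by rewrite deriveM ?dfz ?dgz //; exact: diff_derivable.
Qed.

Lemma has_diff_comp {phi phi' : R -> R} {f df} :
  (forall x, is_derive x (1 : R) phi (phi' x)) -> has_diff f df ->
  has_diff (fun z => phi (f z)) (fun z v => phi' (f z) * df z v).
Proof.
move=> dphi fdf z; have [fz dfz] := fdf z.
have phiz : differentiable phi (f z).
  by apply/derivable1_diffP; case: (dphi (f z)).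
have comp_z : differentiable (phi \o f) z by exact: differentiable_comp.
split=> // v; rewrite (deriveE _ comp_z) diff_comp //= -(deriveE _ fz) dfz.
by rewrite diff1E // derive1E derive_val mulrC.
Qed.

Lemma has_diff2_eq {f g df dg d2f d2g} : has_diff2 f df d2f ->
  (forall z, f z = g z) -> (forall z v, df z v = dg z v) ->
  (forall z v w, d2f z v w = d2g z v w) -> has_diff2 g dg d2g.
Proof.
move=> fdf /funext <- edf ed2f.
have -> : dg = df by apply/funext => z; apply/funext => v.
have -> : d2g = d2f.
  by apply/funext => z; apply/funext => v; apply/funext => w.
exact: fdf.
Qed.

Lemma has_diff2_cst (c : R) :
  has_diff2 (fun _ => c) (fun _ _ => 0) (fun _ _ _ => 0).
Proof.
by split=> [|v|v w]; [exact: has_diff_cst|exact: has_diff_cst|exact: cst_continuous].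
Qed.

Lemma has_diff2D {f g df dg d2f d2g} : has_diff2 f df d2f -> has_diff2 g dg d2g ->
  has_diff2 (fun z => f z + g z) (fun z v => df z v + dg z v)
    (fun z v w => d2f z v w + d2g z v w).
Proof.
move=> [f1 f2 f3] [g1 g2 g3]; split=> [|v|v w z]; first exact: has_diffD.
  exact: has_diffD.
exact: continuousD_fun (f3 v w z) (g3 v w z).
Qed.

Lemma has_diff2M {f g df dg d2f d2g} : has_diff2 f df d2f -> has_diff2 g dg d2g ->
  has_diff2 (fun z => f z * g z) (fun z v => f z * dg z v + g z * df z v)
    (fun z v w => f z * d2g z v w + dg z v * df z w
                  + (g z * d2f z v w + df z v * dg z w)).
Proof.
move=> [f1 f2 f3] [g1 g2 g3]; split=> [|v|v w z]; first exact: has_diffM.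
  by apply: has_diffD; apply: has_diffM.
have c_f := has_diff_continuous f1; have c_g := has_diff_continuous g1.
have c_df u := has_diff_continuous (f2 u); have c_dg u := has_diff_continuous (g2 u).
by do 2?apply: continuousD_fun; apply: continuousM_fun;
  solve [exact: c_f|exact: c_g|exact: c_df|exact: c_dg|exact: f3|exact: g3].
Qed.

Lemma has_diff2_comp {phi phi' phi'' : R -> R} {f df d2f} :
  has_derive2 phi phi' phi'' -> has_diff2 f df d2f ->
  has_diff2 (fun z => phi (f z)) (fun z v => phi' (f z) * df z v)
    (fun z v w => phi' (f z) * d2f z v w + df z v * (phi'' (f z) * df z w)).
Proof.
move=> [phi1 phi2 phi3] [f1 f2 f3]; split=> [|v|v w z]; first exact: has_diff_comp.
  by apply: has_diffM => //; exact: has_diff_comp.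
have c_f := has_diff_continuous f1; have c_df u := has_diff_continuous (f2 u).
have c_phi' : continuous phi'.
  by move=> x; apply/differentiable_continuous/derivable1_diffP; case: (phi2 x).
have c_comp (h : R -> R) : continuous h -> continuous (fun z => h (f z)).
  by move=> c_h y; exact: continuous_comp (c_f y) (c_h (f y)).
apply: continuousD_fun; apply: continuousM_fun; try apply: continuousM_fun.
all: solve [exact: c_comp|exact: c_df|exact: f3].
Qed.

Lemma has_diff2_sum {I : Type} (s : seq I) (P : pred I) (F : I -> V -> R) dF d2F :
  (forall i, has_diff2 (F i) (dF i) (d2F i)) ->
  has_diff2 (fun z => \sum_(i <- s | P i) F i z)
    (fun z v => \sum_(i <- s | P i) dF i z v)
    (fun z v w => \sum_(i <- s | P i) d2F i z v w).
Proof.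
move=> Fd; elim: s => [|i s IH].
  by apply: (has_diff2_eq (has_diff2_cst 0)) => *; rewrite big_nil.
case Pi: (P i); last by apply: (has_diff2_eq IH) => *; rewrite big_cons Pi.
by apply: (has_diff2_eq (has_diff2D (Fd i) IH)) => *; rewrite big_cons Pi.
Qed.

Lemma has_diff2_divr {f df d2f} (c : R) : has_diff2 f df d2f ->
  has_diff2 (fun z => f z / c) (fun z v => df z v / c) (fun z v w => d2f z v w / c).
Proof.
move=> fd; apply: (has_diff2_eq (has_diff2M fd (has_diff2_cst c^-1))) => *.
all: by rewrite /=; ring.
Qed.

Lemma has_diff_linear (L : V -> R) : linear L -> continuous L ->
  has_diff L (fun _ v => L v).
Proof.
move=> linL contL.
pose Ll : {linear V -> R} := HB.pack L (GRing.isLinear.Build _ _ _ _ _ linL).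
have dL z : differentiable Ll z by exact/linear_differentiable/contL.
have -> : L = Ll by [].
by move=> z; split=> // v; rewrite deriveE // diff_lin.
Qed.

Lemma has_diff2_sum_sqr (I : finType) (L : I -> V -> R) :
  (forall i, linear (L i)) -> (forall i, continuous (L i)) ->
  has_diff2 (fun z => \sum_i L i z ^+ 2) (fun z v => 2 * \sum_i L i z * L i v)
    (fun _ v w => 2 * \sum_i L i v * L i w).
Proof.
move=> linL contL.
have dL i : has_diff2 (L i) (fun _ v => L i v) (fun _ _ _ => 0).
  split=> [|v|v w]; [exact: has_diff_linear|exact: has_diff_cst|exact: cst_continuous].
apply: (has_diff2_eq (has_diff2_sum (index_enum I) xpredT _ _ _
  (fun i => has_diff2M (dL i) (dL i)))) => *.
all: by rewrite ?mulr_sumr; apply: eq_bigr => i _; rewrite ?expr2; ring.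
Qed.

End SecondDifferential.

Section CnCalculus.
Context {R : realType} {n : nat}.
Local Notation V := (Cn R n).
Implicit Types (z v : V) (k : nat).

Lemma C2_has_diff2 {f : V -> R} {df d2f} : has_diff2 f df d2f -> C2 f.
Proof.
move=> [f1 f2 f3].
have Df v : (fun a => 'D_v f a) = (fun a => df a v).
  by apply/funext => a; have [_ ->] := f1 a.
split=> [z|]; first by case: (f1 z).
split=> [v z|v w]; first by rewrite Df; case: (f2 v z).
have -> : (fun a => 'D_w ('D_v f) a) = (fun a => d2f a v w).
  by apply/funext => a; rewrite Df; have [_ ->] := f2 v a.
exact: f3.
Qed.

Lemma levi_has_diff2 {f : V -> R} {df d2f} : has_diff2 f df d2f ->
  forall z v, levi f z v = d2f z v v + d2f z (Jc v) (Jc v).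
Proof.
move=> [f1 f2 _] z v.
have Df u : (fun a => 'D_u f a) = (fun a => df a u).
  by apply/funext => a; have [_ ->] := f1 a.
by rewrite /levi !Df; have [_ ->] := f2 v z; have [_ ->] := f2 (Jc v) z.
Qed.

Lemma rho1_ge0 z : 0 <= rho1 z.
Proof. by apply: sumr_ge0 => i _; exact: sqr_ge0. Qed.

Lemma rho2_ge0 k z : 0 <= rho2 k z.
Proof. by apply: addr_ge0; apply: sumr_ge0 => i _; exact: sqr_ge0. Qed.

Lemma geucl_ge0 v : 0 <= geucl v.
Proof. by apply: sumr_ge0 => i _; apply: addr_ge0; exact: sqr_ge0. Qed.

Lemma xco_linear i : linear (fun z : V => xco z i).
Proof. by move=> a x y; rewrite /xco /= !mxE. Qed.

Lemma yco_linear i : linear (fun z : V => yco z i).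
Proof. by move=> a x y; rewrite /yco /= !mxE. Qed.

Lemma xco_continuous i : continuous (fun z : V => xco z i).
Proof.
move=> z; apply: (continuous_comp (f := fst) (g := fun M : 'rV[R]_n => M ord0 i)).
  exact: cvg_fst.
exact: coord_continuous.
Qed.

Lemma yco_continuous i : continuous (fun z : V => yco z i).
Proof.
move=> z; apply: (continuous_comp (f := snd) (g := fun M : 'rV[R]_n => M ord0 i)).
  exact: cvg_snd.
exact: coord_continuous.
Qed.

Definition rho2_co k z (i : 'I_n) : R := if (i < k)%N then xco z i else yco z i.

Lemma rho2E k z : rho2 k z = \sum_i rho2_co k z i ^+ 2.
Proof.
rewrite [RHS](bigID (fun i : 'I_n => (i < k)%N)) /= /rho2; congr (_ + _).
  by apply: eq_bigr => i ilt; rewrite /rho2_co ilt.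
apply: eq_big => [i|i ige]; first by rewrite -leqNgt.
by rewrite /rho2_co ltnNge ige.
Qed.

Definition drho1 z v : R := 2 * \sum_i xco z i * xco v i.
Definition drho2 k z v : R := 2 * \sum_i rho2_co k z i * rho2_co k v i.

Lemma has_diff2_rho1 : has_diff2 (@rho1 R n) drho1 (fun _ => drho1).
Proof. exact: has_diff2_sum_sqr xco_linear xco_continuous. Qed.

Lemma has_diff2_rho2 k : has_diff2 (rho2 k) (drho2 k) (fun _ => drho2 k).
Proof.
have lin i : linear (fun z : V => rho2_co k z i).
  by rewrite /rho2_co; case: (i < k)%N; [exact: xco_linear|exact: yco_linear].
have cont i : continuous (fun z : V => rho2_co k z i).
  by rewrite /rho2_co; case: (i < k)%N; [exact: xco_continuous|exact: yco_continuous].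
by apply: (has_diff2_eq (has_diff2_sum_sqr _ _ lin cont)) => // z; rewrite rho2E.
Qed.

Lemma xco_Jc v i : xco (Jc v) i = - yco v i.
Proof. by rewrite /xco /Jc /= mxE. Qed.

Lemma yco_Jc v i : yco (Jc v) i = xco v i.
Proof. by []. Qed.

Lemma drho1_levi v : drho1 v v + drho1 (Jc v) (Jc v) = 2 * geucl v.
Proof.
rewrite /drho1 -mulrDr -big_split; congr (2 * _); apply: eq_bigr => i _.
by rewrite /= xco_Jc; ring.
Qed.

Lemma geucl_rho2_co k v :
  geucl v = \sum_i (rho2_co k v i ^+ 2 + rho2_co k (Jc v) i ^+ 2).
Proof.
apply: eq_bigr => i _; rewrite /rho2_co xco_Jc yco_Jc.
by case: (i < k)%N; rewrite ?sqrrN // addrC.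
Qed.

Lemma drho2_levi k v : drho2 k v v + drho2 k (Jc v) (Jc v) = 2 * geucl v.
Proof. by rewrite /drho2 -mulrDr -big_split (geucl_rho2_co k). Qed.

End CnCalculus.

Lemma polarization_ge {R : realDomainType} (p q r p' q' r' : R) :
  - ((q - r) ^+ 2 + (q' + r') ^+ 2)
  <= 4 * ((p + q) * (p + r) + (p' + q') * (p' - r')).
Proof.
rewrite -subr_ge0.
have -> : 4 * ((p + q) * (p + r) + (p' + q') * (p' - r'))
    - - ((q - r) ^+ 2 + (q' + r') ^+ 2)
    = (2 * p + q + r) ^+ 2 + (2 * p' + q' - r') ^+ 2 by ring.
by apply: addr_ge0; apply: sqr_ge0.
Qed.

Section GradientBounds.
Context {R : realType} {n : nat} (k : nat) (z v : Cn R n).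

Lemma drho1_Jc_le : drho1 z v ^+ 2 + drho1 z (Jc v) ^+ 2 <= 4 * rho1 z * geucl v.
Proof.
have -> : geucl v = \sum_i (xco v i ^+ 2 + xco (Jc v) i ^+ 2).
  by apply: eq_bigr => i _; rewrite xco_Jc sqrrN.
have := cauchy_schwarz_pair xpredT (xco z) (xco v) (xco (Jc v)).
by rewrite /drho1 /rho1 !exprMn; lra.
Qed.

Lemma drho2_Jc_le :
  drho2 k z v ^+ 2 + drho2 k z (Jc v) ^+ 2 <= 4 * rho2 k z * geucl v.
Proof.
have := cauchy_schwarz_pair xpredT (rho2_co k z) (rho2_co k v) (rho2_co k (Jc v)).
by rewrite /drho2 rho2E (geucl_rho2_co k) !exprMn; lra.
Qed.

Lemma geucl_ge_partial (P : pred 'I_n) :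
  \sum_(i | P i) (xco v i ^+ 2 + yco v i ^+ 2) <= geucl v.
Proof.
rewrite /geucl [leRHS](bigID P) /= lerDl.
by apply: sumr_ge0 => i _; apply: addr_ge0; exact: sqr_ge0.
Qed.

Lemma rho1_rho2_ge_tail :
  \sum_(i < n | ~~ (i < k)%N) (xco z i ^+ 2 + yco z i ^+ 2) <= rho1 z + rho2 k z.
Proof.
rewrite big_split /= /rho1 [\sum_(i < n) _](bigID (fun i : 'I_n => (i < k)%N)) /=.
under [X in _ <= _ + (_ + X)]eq_bigl do rewrite leqNgt.
have : 0 <= \sum_(i < n | (i < k)%N) xco z i ^+ 2.
  by apply: sumr_ge0 => i _; exact: sqr_ge0.
lra.
Qed.

Lemma drho12_Jc_ge : - ((rho1 z + rho2 k z) * geucl v)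
  <= drho1 z v * drho2 k z v + drho1 z (Jc v) * drho2 k z (Jc v).
Proof.
(* Coordinates i < k are shared by rho1 and rho2; on the others the
   complex Cauchy-Schwarz inequality applies. *)
pose x i := xco z i; pose y i := yco z i; pose a i := xco v i; pose b i := yco v i.
pose al1 := \sum_(i < n | (i < k)%N) x i * a i.
pose al2 := \sum_(i < n | (i < k)%N) x i * b i.
pose be1 := \sum_(i < n | ~~ (i < k)%N) x i * a i.
pose be2 := \sum_(i < n | ~~ (i < k)%N) x i * b i.
pose ga1 := \sum_(i < n | ~~ (i < k)%N) y i * a i.
pose ga2 := \sum_(i < n | ~~ (i < k)%N) y i * b i.
have split_k := bigID (fun i : 'I_n => (i < k)%N).
have -> : drho1 z v = 2 * (al1 + be1) by rewrite /drho1 split_k.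
have -> : drho1 z (Jc v) = - (2 * (al2 + be2)).
  rewrite /drho1 split_k /= -mulrN opprD -!sumrN.
  by congr (2 * (_ + _)); apply: eq_bigr => i _; rewrite xco_Jc mulrN.
have -> : drho2 k z v = 2 * (al1 + ga2).
  rewrite /drho2 split_k /=; congr (2 * (_ + _)); apply: eq_bigr => i.
    by rewrite /rho2_co => ->.
  by rewrite /rho2_co => /negbTE ->.
have -> : drho2 k z (Jc v) = 2 * (- al2 + ga1).
  rewrite /drho2 split_k /= -sumrN; congr (2 * (_ + _)); apply: eq_bigr => i.
    by rewrite /rho2_co => ->; rewrite xco_Jc mulrN.
  by rewrite /rho2_co => /negbTE ->.
pose X := \sum_(i < n | ~~ (i < k)%N) (x i ^+ 2 + y i ^+ 2).
pose Y := \sum_(i < n | ~~ (i < k)%N) (a i ^+ 2 + b i ^+ 2).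
have cs : (be1 - ga2) ^+ 2 + (be2 + ga1) ^+ 2 <= X * Y.
  have := cauchy_schwarz_complex (fun i : 'I_n => ~~ (i < k)%N) x y a b.
  by rewrite sumrB big_split.
have Y_ge0 : 0 <= Y by apply: sumr_ge0 => i _; apply: addr_ge0; exact: sqr_ge0.
have X_le : X <= rho1 z + rho2 k z := rho1_rho2_ge_tail.
have Y_le : Y <= geucl v := geucl_ge_partial _.
have := ler_wpM2r Y_ge0 X_le.
have := ler_wpM2l (addr_ge0 (rho1_ge0 z) (rho2_ge0 k z)) Y_le.
have := polarization_ge al1 be1 ga2 al2 be2 ga1.
lra.
Qed.

End GradientBounds.

Lemma sqrtr_lt_sqr {R : rcfType} (a c : R) :
  0 < c -> (Num.sqrt a < c) = (a < c ^+ 2).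
Proof.
move=> c_gt0; rewrite -ltr_sqrt; last exact: exprn_gt0.
by rewrite sqrtr_sqr gtr0_norm.
Qed.

Section Beta.
Context {R : realType} {n : nat} {k : nat} {r : R}.
Hypothesis r_gt0 : 0 < r.
Local Notation V := (Cn R n).
Implicit Types z v : V.
Local Notation sx z := (rho1 z / r ^+ 2).
Local Notation sy z := (rho2 k z / r ^+ 2).

Let r_neq0 : r != 0 := lt0r_neq0 r_gt0.
Let r2_gt0 : 0 < r ^+ 2 := exprn_gt0 2 r_gt0.

Let sx_ge0 z : 0 <= sx z.
Proof. exact: divr_ge0 (rho1_ge0 z) (ltW r2_gt0). Qed.

Let sy_ge0 z : 0 <= sy z.
Proof. exact: divr_ge0 (rho2_ge0 k z) (ltW r2_gt0). Qed.

Definition beta (z : V) : R := 8 * r ^+ 2 / 5 * (cutoff (sx z) * cutoff (sy z)).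

Let has_diff2_beta : has_diff2 beta _ _ :=
  has_diff2M (has_diff2_cst (8 * r ^+ 2 / 5))
    (has_diff2M
      (has_diff2_comp has_derive2_cutoff (has_diff2_divr (r ^+ 2) has_diff2_rho1))
      (has_diff2_comp has_derive2_cutoff (has_diff2_divr (r ^+ 2) (has_diff2_rho2 k)))).

Lemma C2_beta : C2 beta.
Proof. exact: C2_has_diff2 has_diff2_beta. Qed.

Lemma levi_beta z v : levi beta z v = 8 * r ^+ 2 / 5 *
  levi_cutoff2 (sx z) (sy z) (geucl v / r ^+ 2)
    ((drho1 z v / r ^+ 2) ^+ 2 + (drho1 z (Jc v) / r ^+ 2) ^+ 2)
    ((drho2 k z v / r ^+ 2) ^+ 2 + (drho2 k z (Jc v) / r ^+ 2) ^+ 2)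
    (drho1 z v / r ^+ 2 * (drho2 k z v / r ^+ 2)
     + drho1 z (Jc v) / r ^+ 2 * (drho2 k z (Jc v) / r ^+ 2)).
Proof.
rewrite (levi_has_diff2 has_diff2_beta) /levi_cutoff2.
have e1 := drho1_levi v; have e2 := drho2_levi k v.
have -> : drho1 (Jc v) (Jc v) = 2 * geucl v - drho1 v v by lra.
have -> : drho2 k (Jc v) (Jc v) = 2 * geucl v - drho2 k v v by lra.
by field.
Qed.

Lemma beta_ge0 z : 0 <= beta z.
Proof.
have [/andP[cx_ge0 _] _ _ _] := cutoff_bounds (sx_ge0 z).
have [/andP[cy_ge0 _] _ _ _] := cutoff_bounds (sy_ge0 z).
by rewrite /beta !mulr_ge0 // ltW.
Qed.

Lemma Vset_small z : Vset k (r / 16) z -> sx z < 1/256 \/ sy z < 1/256.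
Proof.
have r16 : (r / 16) ^+ 2 = 1/256 * r ^+ 2 by field.
rewrite !ltr_pdivrMr //.
by case; rewrite /= /absx /absy sqrtr_lt_sqr ?divr_gt0 // r16 => ?; [left|right].
Qed.

Lemma sx_ge1 z : r <= absx z -> 1 <= sx z.
Proof. by rewrite /absx leNgt sqrtr_lt_sqr // -leNgt ler_pdivlMr // mul1r. Qed.

Lemma sy_ge1 z : r <= absy k z -> 1 <= sy z.
Proof. by rewrite /absy leNgt sqrtr_lt_sqr // -leNgt ler_pdivlMr // mul1r. Qed.

Lemma beta_large_small z : 1 <= sx z -> sy z <= 1/4 -> beta z = rho2 k z.
Proof.
move=> /cutoff_large[cx _ _] /cutoff_small[cy _ _].
by rewrite /beta cx cy; field.
Qed.

Lemma beta_small_large z : sx z <= 1/4 -> 1 <= sy z -> beta z = rho1 z.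
Proof.
move=> /cutoff_small[cx _ _] /cutoff_large[cy _ _].
by rewrite /beta cx cy; field.
Qed.

Lemma beta_rho1_eq0 z : rho1 z = 0 -> beta z = 0.
Proof.
move=> rho1_eq0; have /cutoff_small[cx _ _] : sx z <= 1/4 by rewrite rho1_eq0 mul0r.
by rewrite /beta cx rho1_eq0 !(mul0r, mulr0).
Qed.

Lemma beta_rho2_eq0 z : rho2 k z = 0 -> beta z = 0.
Proof.
move=> rho2_eq0; have /cutoff_small[cy _ _] : sy z <= 1/4 by rewrite rho2_eq0 mul0r.
by rewrite /beta cy rho2_eq0 !(mul0r, mulr0).
Qed.

Let ler_divr4 (a b : R) : a <= b -> a / r ^+ 4 <= b / r ^+ 4.
Proof. by move=> ab; rewrite ler_pM2r // invr_gt0 exprn_gt0. Qed.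

Let grad_sx_le z v :
  (drho1 z v / r ^+ 2) ^+ 2 + (drho1 z (Jc v) / r ^+ 2) ^+ 2
  <= 4 * sx z * (geucl v / r ^+ 2).
Proof.
have -> : 4 * sx z * (geucl v / r ^+ 2) = 4 * rho1 z * geucl v / r ^+ 4 by field.
have -> : (drho1 z v / r ^+ 2) ^+ 2 + (drho1 z (Jc v) / r ^+ 2) ^+ 2
    = (drho1 z v ^+ 2 + drho1 z (Jc v) ^+ 2) / r ^+ 4 by field.
exact/ler_divr4/drho1_Jc_le.
Qed.

Let grad_sy_le z v :
  (drho2 k z v / r ^+ 2) ^+ 2 + (drho2 k z (Jc v) / r ^+ 2) ^+ 2
  <= 4 * sy z * (geucl v / r ^+ 2).
Proof.
have -> : 4 * sy z * (geucl v / r ^+ 2) = 4 * rho2 k z * geucl v / r ^+ 4 by field.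
have -> : (drho2 k z v / r ^+ 2) ^+ 2 + (drho2 k z (Jc v) / r ^+ 2) ^+ 2
    = (drho2 k z v ^+ 2 + drho2 k z (Jc v) ^+ 2) / r ^+ 4 by field.
exact/ler_divr4/drho2_Jc_le.
Qed.

Let grad_sxy_ge z v : - ((sx z + sy z) * (geucl v / r ^+ 2))
  <= drho1 z v / r ^+ 2 * (drho2 k z v / r ^+ 2)
     + drho1 z (Jc v) / r ^+ 2 * (drho2 k z (Jc v) / r ^+ 2).
Proof.
have -> : - ((sx z + sy z) * (geucl v / r ^+ 2))
    = - ((rho1 z + rho2 k z) * geucl v) / r ^+ 4 by field.
have -> : drho1 z v / r ^+ 2 * (drho2 k z v / r ^+ 2)
      + drho1 z (Jc v) / r ^+ 2 * (drho2 k z (Jc v) / r ^+ 2)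
    = (drho1 z v * drho2 k z v + drho1 z (Jc v) * drho2 k z (Jc v)) / r ^+ 4.
  by field.
exact/ler_divr4/drho12_Jc_ge.
Qed.

Lemma levi_beta_ge0 z v : sx z < 1/256 \/ sy z < 1/256 -> 0 <= levi beta z v.
Proof.
move=> small; rewrite levi_beta.
apply: mulr_ge0; first by rewrite divr_ge0 ?mulr_ge0 ?ltW.
have G_ge0 : 0 <= geucl v / r ^+ 2 by exact: divr_ge0 (geucl_ge0 v) (ltW r2_gt0).
exact: levi_cutoff2_ge0 (sx_ge0 z) (sy_ge0 z) G_ge0 small
  (grad_sx_le z v) (grad_sy_le z v) (grad_sxy_ge z v).
Qed.

Lemma levi_beta_le z v : levi beta z v <= 17 * geucl v.
Proof.
rewrite levi_beta.
have G_ge0 : 0 <= geucl v / r ^+ 2 by exact: divr_ge0 (geucl_ge0 v) (ltW r2_gt0).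
have c_ge0 : 0 <= 8 * r ^+ 2 / 5 by rewrite divr_ge0 ?mulr_ge0 ?ltW.
have := ler_wpM2l c_ge0
  (levi_cutoff2_le (sx_ge0 z) (sy_ge0 z) G_ge0 (grad_sx_le z v) (grad_sy_le z v)).
have -> : 8 * r ^+ 2 / 5 * (21/2 * (geucl v / r ^+ 2)) = 84/5 * geucl v by field.
by have := geucl_ge0 v; lra.
Qed.

Lemma levi_beta_small_large z v : sx z <= 1/4 -> 1 <= sy z ->
  levi beta z v = 2 * geucl v.
Proof. by move=> sx_le sy_ge; rewrite levi_beta levi_cutoff2_small_large //; field. Qed.

Lemma levi_beta_large_small z v : 1 <= sx z -> sy z <= 1/4 ->
  levi beta z v = 2 * geucl v.
Proof.
move=> sx_ge sy_le.
by rewrite levi_beta levi_cutoff2C levi_cutoff2_small_large //; field.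
Qed.

End Beta.

Arguments beta {R n} k r z.

Theorem proposition2p7 (R : realType) (n k : nat) (hkn : (k <= n)%N) :
  exists r0 : R, 0 < r0 /\
  forall r : R, 0 < r -> r < r0 ->
  exists D : R, 0 < D /\ D < 1 /\
  exists beta : Cn R n -> R,
    C2 beta /\
    (forall z, 0 <= beta z) /\
    weakly_psh_on (Vset k (D * r)) beta /\
    (forall z, r <= absx z -> Vset k (D * r) z -> beta z = absy k z ^+ 2) /\
    (forall z, r <= absy k z -> Vset k (D * r) z -> beta z = absx z ^+ 2) /\
    (forall z, rho1 z = 0 -> beta z = 0) /\
    (forall z, rho2 k z = 0 -> beta z = 0) /\
    (exists C : R, 0 < C /\ forall z v, levi beta z v <= C * geucl v) /\
    (exists c : R, 0 < c /\ forall z, r < absy k z -> Vset k (D * r) z ->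
        forall v, c * geucl v <= levi beta z v) /\
    (exists c : R, 0 < c /\ forall z, r < absx z -> Vset k (D * r) z ->
        forall v, c * geucl v <= levi beta z v).
Proof.
(* The construction works for every k. *)
exists 1; split=> [|r r_gt0 _]; first exact: ltr01.
exists (1/16); split; first lra; split; first lra.
have -> : 1/16 * r = r / 16 by field.
exists (beta k r); split; first exact: C2_beta.
split; first exact: beta_ge0.
split; first by move=> z /(Vset_small r_gt0) small v; exact: levi_beta_ge0.
split.
  move=> z /(sx_ge1 r_gt0) sx_ge /(Vset_small r_gt0) [|sy_lt]; first lra.
  by rewrite /absy sqr_sqrtr ?rho2_ge0 // (beta_large_small r_gt0) //; lra.
split.
  move=> z /(sy_ge1 r_gt0) sy_ge /(Vset_small r_gt0) [sx_lt|]; last lra.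
  by rewrite /absx sqr_sqrtr ?rho1_ge0 // (beta_small_large r_gt0) //; lra.
split; first exact: beta_rho1_eq0.
split; first exact: beta_rho2_eq0.
split; first by exists 17; split=> [|z v]; [lra|exact: levi_beta_le].
split.
  exists 2; split=> [|z /ltW/(sy_ge1 r_gt0) sy_ge /(Vset_small r_gt0) small v].
    lra.
  case: small => [sx_lt|sy_lt]; last lra.
  by rewrite (levi_beta_small_large r_gt0) //; lra.
exists 2; split=> [|z /ltW/(sx_ge1 r_gt0) sx_ge /(Vset_small r_gt0) small v].
  lra.
case: small => [sx_lt|sy_lt]; first lra.
by rewrite (levi_beta_large_small r_gt0) //; lra.
Qed.
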